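(* Let $A,B\in\mathbb{M}_k$ be positive definite matrices and let $\Phi:\mathbb{M}_k\to\mathbb{M}_n$ be a unital positive linear map. Then $\mathrm{Tr}\big[\Phi((A+B)^p)^{-1/p}\big]\le\mathrm{Tr}\big[\Phi(A^p)^{-1/p}\big]+\mathrm{Tr}\big[\Phi(B^p)^{-1/p}\big]$ for all $p\in[-1,1]\setminus\{0\}$.
   Context: $\mathbb{M}_n$ denotes $n\times n$ complex matrices, $\mathrm{Tr}$ the trace. Positive linear maps preserve positive semidefiniteness; unital means $\Phi(I)=I$. *)

From HB Require Import structures.
From mathcomp Require Import all_boot all_order all_algebra.
From mathcomp Require Import complex.
From mathcomp Require Import reals exp.
Set Implicit Arguments.
Unset Strict Implicit.
Unset Printing Implicit Defensive.
Import Order.TTheory GRing.Theory Num.Theory.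
Local Open Scope ring_scope.
Local Open Scope sesquilinear_scope.

Definition psdmx {C : numClosedFieldType} (n : nat) (A : 'M[C]_n) : Prop :=
  A \is hermsymmx /\ forall v : 'rV[C]_n, 0 <= (v *m A *m v ^t*) 0 0.

Definition pdmx {C : numClosedFieldType} (n : nat) (A : 'M[C]_n) : Prop :=
  A \is hermsymmx /\ forall v : 'rV[C]_n, v != 0 -> 0 < (v *m A *m v ^t*) 0 0.

(* Real power A^p of a (positive definite) Hermitian matrix, via the spectral
   decomposition A = U^-1 diag(d) U, U unitary:  A^p = U^-1 diag(d^p) U. *)
Definition mpow {R : realType} (n : nat) (A : 'M[R[i]]_n) (p : R) : 'M[R[i]]_n :=
  invmx (spectralmx A) *m
    diag_mx (map_mx (fun z : R[i] => ((complex.Re z) `^ p)%:C%C) (spectral_diag A))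
  *m spectralmx A.

Definition positive_map {C : numClosedFieldType} (k n : nat)
  (Phi : 'M[C]_k -> 'M[C]_n) : Prop :=
  forall A, psdmx A -> psdmx (Phi A).

Definition unital_map {C : numClosedFieldType} (k n : nat)
  (Phi : 'M[C]_k -> 'M[C]_n) : Prop :=
  Phi 1%:M = 1%:M.

(* For 0 < p <= 1, the Loewner-Heinz inequality turns A <= A + B into
   A^p <= (A + B)^p; the positive map Phi preserves this order and X |-> Tr X^s
   is order-reversing for s = -1/p <= 0, so already
   Tr Phi((A + B)^p)^(-1/p) <= Tr Phi(A^p)^(-1/p).  For -1 <= p < 0,
   Loewner-Heinz with exponent -p followed by inversion gives (A + B)^p <= A^p,
   and X |-> Tr X^s is order-preserving for s = -1/p >= 1.  In both cases the
   B-term is a nonnegative summand.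

   Loewner-Heinz is first proved for dyadic exponents: if A^p <= B^p and
   A^q <= B^q, then B^(-p/2) A^(p/2) and B^(-q/2) A^(q/2) are contractions, so
   the eigenvalues of B^(-r/2) A^r B^(-r/2) are at most 1 for r = (p + q)/2,
   i.e. A^r <= B^r; continuity of t |-> <v, A^t v> extends it to [0, 1].  The
   trace monotonicity is Klein's inequality for the tangent lines of the
   convex functions x |-> x^s, s <= 0 or s >= 1. *)

From HB Require Import structures.
From mathcomp Require Import all_boot all_order all_algebra.
From mathcomp Require Import complex.
From mathcomp Require Import reals exp.
From mathcomp Require Import topology normedtype sequences.
From mathcomp Require Import ring lra zify.
Set Implicit Arguments.
Unset Strict Implicit.
Unset Printing Implicit Defensive.
Import Order.TTheory GRing.Theory Num.Theory.
Local Open Scope ring_scope.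
Local Open Scope sesquilinear_scope.

Lemma exists_lb_gt0 (F : numFieldType) n (e : 'I_n -> F) :
  (forall i, 0 < e i) -> exists2 c, 0 < c & forall i, c <= e i.
Proof.
move=> e_gt0; have s_ge0 : 0 <= \sum_i (e i)^-1.
  by rewrite sumr_ge0 // => i _; rewrite invr_ge0 ltW.
exists (1 + \sum_i (e i)^-1)^-1 => [|i]; first by rewrite invr_gt0 ltr_wpDr.
rewrite -[e i]invrK lef_pV2 ?posrE ?invr_gt0 ?ltr_wpDr //.
rewrite (bigD1 i) //= addrA ler_wpDr ?lerDr ?sumr_ge0 // => j _.
by rewrite invr_ge0 ltW.
Qed.

Section LoewnerOrder.
Variable C : numClosedFieldType.

Definition qform n (X : 'M[C]_n) (v : 'rV[C]_n) : C := (v *m X *m v^t*) 0 0.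

Definition loewner n (X Y : 'M[C]_n) : Prop := forall v, qform X v <= qform Y v.

Definition contractionmx n (K : 'M[C]_n) : Prop :=
  forall v, dotmx (v *m K) (v *m K) <= dotmx v v.

Definition udiag n (U : 'M[C]_n) (d : 'I_n -> C) : 'M[C]_n :=
  U^t* *m diag_mx (\row_i d i) *m U.

Lemma adjmxM m n p (A : 'M[C]_(m, n)) (B : 'M[C]_(n, p)) :
  (A *m B)^t* = B^t* *m A^t*.
Proof. by rewrite trmx_mul map_mxM. Qed.

Lemma adjmxB m n (A B : 'M[C]_(m, n)) : (A - B)^t* = A^t* - B^t*.
Proof. by rewrite linearB /= map_mxB. Qed.

Lemma hermsymmxP n (X : 'M[C]_n) : reflect (X^t* = X) (X \is hermsymmx).
Proof.
by apply: (iffP (is_hermitianmxP _ _ _)); rewrite expr0 scale1r => /esym.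
Qed.

Lemma qformJ n (N X : 'M[C]_n) v : qform (N *m X *m N^t*) v = qform X (v *m N).
Proof. by rewrite /qform adjmxM !mulmxA. Qed.

Lemma qformD n (X Y : 'M[C]_n) v : qform (X + Y) v = qform X v + qform Y v.
Proof. by rewrite /qform mulmxDr mulmxDl [LHS]mxE. Qed.

Lemma qformB n (X Y : 'M[C]_n) v : qform (X - Y) v = qform X v - qform Y v.
Proof. by rewrite /qform mulmxBr mulmxBl [LHS]mxE [in X in _ + X]mxE. Qed.

Lemma qformZ n c (X : 'M[C]_n) v : qform (c *: X) v = c * qform X v.
Proof. by rewrite /qform -scalemxAr -scalemxAl [LHS]mxE. Qed.

Lemma qformBr n (X : 'M[C]_n) (u w : 'rV[C]_n) : qform X (u - w) =
  qform X u - (u *m X *m w^t*) 0 0 - (w *m X *m u^t*) 0 0 + qform X w.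
Proof.
have entryB (A B : 'M[C]_1) : (A - B) 0 0 = A 0 0 - B 0 0 by rewrite !mxE.
rewrite /qform adjmxB !mulmxBl !mulmxBr !entryB.
by ring.
Qed.

Lemma qform1 n (v : 'rV[C]_n) : qform 1%:M v = dotmx v v.
Proof. by rewrite /qform mulmx1 dotmxE. Qed.

Lemma dnorm_mulmx n (K : 'M[C]_n) v : dotmx (v *m K) (v *m K) = qform (K *m K^t*) v.
Proof. by rewrite -qform1 -qformJ mulmx1. Qed.

Lemma pdmx_psdmx n (X : 'M[C]_n) : pdmx X -> psdmx X.
Proof.
case=> hX pX; split=> // v; have [->|/pX/ltW //] := eqVneq v 0.
by rewrite !mul0mx mxE.
Qed.

Lemma pdmxD n (X Y : 'M[C]_n) : pdmx X -> pdmx Y -> pdmx (X + Y).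
Proof.
move=> [/hermsymmxP hX X_gt0] [/hermsymmxP hY Y_gt0]; split.
  by apply/hermsymmxP; rewrite linearD /= map_mxD hX hY.
by move=> v v0; rewrite -/(qform _ v) qformD addr_gt0 ?X_gt0 ?Y_gt0.
Qed.

Lemma loewner_addr n (X Y : 'M[C]_n) : psdmx Y -> loewner X (X + Y).
Proof. by move=> [_ Y_ge0] v; rewrite qformD lerDl; apply: Y_ge0. Qed.

Lemma loewner_pdmx n (c : C) (X : 'M[C]_n) : X \is hermsymmx -> 0 < c ->
  loewner c%:M X -> pdmx X.
Proof.
move=> hX c0 cX; split=> // v v0; apply: lt_le_trans (cX v).
by rewrite -scalemx1 qformZ qform1 mulr_gt0 ?dotmx_is_dotmx.
Qed.

Section Diagonalization.
Variables (n : nat) (U : 'M[C]_n).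
Hypothesis uU : U \is unitarymx.

Lemma qform_udiag d v :
  qform (udiag U d) v = \sum_j d j * `|(v *m U^t*) 0 j| ^+ 2.
Proof.
rewrite /udiag -{2}[U]trmxCK qformJ /qform mul_mx_diag mxE.
by apply: eq_bigr => j _; rewrite !mxE normCK mulrCA mulrA.
Qed.

Lemma udiagM d e : udiag U d *m udiag U e = udiag U (fun i => d i * e i).
Proof.
rewrite /udiag !mulmxA -[_ *m U *m U^t*]mulmxA (unitarymxP uU) mulmx1.
rewrite -[_ *m diag_mx _ *m diag_mx _]mulmxA mulmx_diag.
by congr (_ *m diag_mx _ *m _); apply/rowP => i; rewrite !mxE.
Qed.

Lemma udiag_const c : udiag U (fun=> c) = c%:M.
Proof.
rewrite /udiag (_ : \row__ c = const_mx c); last by apply/rowP => i; rewrite !mxE.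
rewrite diag_const_mx mul_mx_scalar -scalemxAl.
by rewrite (mulmx1C (unitarymxP uU)) scalemx1.
Qed.

Lemma udiag_herm d : (forall i, d i \is Num.real) -> udiag U d \is hermsymmx.
Proof.
move=> dR; apply/hermsymmxP; rewrite /udiag !adjmxM trmxCK mulmxA.
rewrite tr_diag_mx map_diag_mx; congr (_ *m diag_mx _ *m _).
by apply/rowP => i; rewrite !mxE; apply: conj_Creal.
Qed.

Lemma row_unitary_adj i : row i U *m U^t* = delta_mx 0 i.
Proof. by rewrite -row_mul (unitarymxP uU) rowE mulmx1. Qed.

Lemma row_unitary_neq0 i : row i U != 0.
Proof.
apply/eqP => Ui0; have /row_unitarymxP/(_ i i)/eqP := uU.
by rewrite Ui0 eqxx dotmxE mul0mx mxE eq_sym oner_eq0.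
Qed.

Lemma qform_udiag_row d i : qform (udiag U d) (row i U) = d i.
Proof.
rewrite qform_udiag row_unitary_adj (bigD1 i) //= big1 => [|j ji].
  by rewrite mxE !eqxx normr1 expr1n mulr1 addr0.
by rewrite mxE (negbTE ji) normr0 expr0n mulr0.
Qed.

Lemma row_udiag d i : row i U *m udiag U d = d i *: row i U.
Proof.
rewrite /udiag !mulmxA row_unitary_adj rowE -!mulmxA mulmxA.
by rewrite -rowE row_diag_mx mxE -scalemxAl -rowE.
Qed.

Lemma loewner_udiag d e : (forall i, d i <= e i) -> loewner (udiag U d) (udiag U e).
Proof.
move=> de v; rewrite !qform_udiag; apply: ler_sum => j _.
by rewrite ler_wpM2r ?exprn_ge0.
Qed.

End Diagonalization.

Lemma herm_udiag n (X : 'M[C]_n) : X \is hermsymmx ->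
  X = udiag (spectralmx X) (fun i => spectral_diag X 0 i).
Proof.
move=> /hermitian_normalmx/orthomx_spectralP {1}->.
rewrite invmx_unitary ?spectral_unitarymx // /udiag.
by congr (_ *m diag_mx _ *m _); apply/rowP => i; rewrite mxE.
Qed.

Lemma spectral_diag_real n (X : 'M[C]_n) i : X \is hermsymmx ->
  spectral_diag X 0 i \is Num.real.
Proof. by move=> /hermitian_spectral_diag_real/mxOverP; apply. Qed.

Lemma herm_loewner_scalar n (T : 'M[C]_n) c : T \is hermsymmx ->
  (forall i, spectral_diag T 0 i <= c) -> loewner T c%:M.
Proof.
move=> hT Tc; rewrite (herm_udiag hT) -(udiag_const (spectral_unitarymx T)).
exact: loewner_udiag.
Qed.

Lemma spectral_diag_qform n (X : 'M[C]_n) i : X \is hermsymmx ->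
  spectral_diag X 0 i = qform X (row i (spectralmx X)).
Proof. by move=> /herm_udiag {2}->; rewrite qform_udiag_row ?spectral_unitarymx. Qed.

Lemma udiag_pdmx n (U : 'M[C]_n) d : U \is unitarymx ->
  (forall i, 0 < d i) -> pdmx (udiag U d).
Proof.
move=> uU d_gt0; have [c c0 cd] := exists_lb_gt0 d_gt0.
apply: loewner_pdmx c0 _; first by apply: udiag_herm => i; apply: gtr0_real.
by rewrite -(udiag_const uU c); apply: loewner_udiag.
Qed.

Lemma pdmx_ge_scalar n (X : 'M[C]_n) : pdmx X -> exists2 c, 0 < c & loewner c%:M X.
Proof.
move=> pX; set U := spectralmx X; have uU : U \is unitarymx by exact: spectral_unitarymx.
have hX := pX.1; have d_gt0 i : 0 < spectral_diag X 0 i.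
  by rewrite spectral_diag_qform //; apply: pX.2; apply: row_unitary_neq0.
have [c c0 cd] := exists_lb_gt0 d_gt0; exists c => //.
by rewrite (herm_udiag hX) -(udiag_const uU); apply: loewner_udiag.
Qed.

Lemma contractionmxM n (K L : 'M[C]_n) :
  contractionmx K -> contractionmx L -> contractionmx (K *m L).
Proof. by move=> cK cL v; rewrite mulmxA; apply: le_trans (cL _) (cK _). Qed.

Lemma contractionmx_adj n (K : 'M[C]_n) : contractionmx K -> contractionmx (K^t*).
Proof.
move=> cK w; set s := dotmx (w *m K^t*) (w *m K^t*).
have s_real : s \is Num.real by rewrite ger0_real ?dnorm_ge0.
have aw : dotmx (w *m K^t* *m K) w = s by rewrite /s !dotmxE adjmxM trmxCK !mulmxA.
have := dnorm_ge0 (@dotmx C n) (w *m K^t* *m K - w).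
rewrite dnormB /= aw (conj_Creal s_real) => h.
rewrite -subr_ge0 (le_trans h) // (_ : dotmx w w - s = s + dotmx w w - (s + s)).
  by rewrite !lerD2r; apply: cK.
by ring.
Qed.

Lemma contractionmx_eigen_norm n (K : 'M[C]_n) (y : 'rV_n) e :
  contractionmx K -> y != 0 -> y *m K = e *: y -> `|e| <= 1.
Proof.
move=> cK y0 yK; have := cK y; rewrite yK dnormZ -ler_pdivlMr ?dotmx_is_dotmx //.
by rewrite divff ?gt_eqF ?dotmx_is_dotmx // expr_le1.
Qed.

Lemma loewner_invmx n (X Y X' Y' : 'M[C]_n) :
  psdmx X -> X' \is hermsymmx -> Y' \is hermsymmx ->
  X *m X' = 1%:M -> Y *m Y' = 1%:M -> loewner X Y -> loewner Y' X'.
Proof.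
move=> [/hermsymmxP hX X_ge0] /hermsymmxP hX' /hermsymmxP hY' XX' YY' XY v.
have X'X : X' *m X = 1%:M by exact: mulmx1C.
set w := v *m Y'; set z := v *m X'.
have Xz : qform X z = qform X' v.
  by rewrite /qform /z adjmxM hX' !mulmxA -[v *m X' *m X]mulmxA X'X mulmx1.
have Xwz : (w *m X *m z^t*) 0 0 = qform Y' v.
  by rewrite /qform /w /z adjmxM hX' !mulmxA -[_ *m X *m X']mulmxA XX' mulmx1.
have Xzw : (z *m X *m w^t*) 0 0 = qform Y' v.
  by rewrite /qform /w /z adjmxM hY' -[v *m X' *m X]mulmxA X'X mulmx1 mulmxA.
have Yw : qform Y w = qform Y' v.
  by rewrite /qform /w adjmxM hY' !mulmxA -[_ *m Y *m Y']mulmxA YY' mulmx1.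
have := X_ge0 (w - z); rewrite -/(qform X _) qformBr Xwz Xzw Xz => h.
rewrite -subr_ge0 (le_trans h) //.
rewrite (_ : qform X' v - qform Y' v = qform Y' v - qform Y' v - qform Y' v + qform X' v).
  by rewrite !lerD2r -Yw; apply: XY.
by ring.
Qed.

Section PositiveMap.
Variables (k n : nat) (Phi : {linear 'M[C]_k -> 'M[C]_n}).
Hypothesis Phi_pos : positive_map Phi.

Lemma positive_map_loewner X Y : X \is hermsymmx -> Y \is hermsymmx ->
  loewner X Y -> loewner (Phi X) (Phi Y).
Proof.
move=> /hermsymmxP hX /hermsymmxP hY XY v.
have YX_psd : psdmx (Y - X).
  split=> [|w]; last by rewrite -/(qform _ w) qformB subr_ge0.
  by apply/hermsymmxP; rewrite adjmxB hX hY.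
by have := (Phi_pos YX_psd).2 v; rewrite -/(qform _ v) linearB qformB subr_ge0.
Qed.

Lemma unital_positive_map_pdmx X : unital_map Phi -> pdmx X -> pdmx (Phi X).
Proof.
move=> Phi1 pX; have [c c0 cX] := pdmx_ge_scalar pX.
have c_herm : (c%:M : 'M[C]_k) \is hermsymmx.
  apply/hermsymmxP; rewrite tr_scalar_mx map_scalar_mx; congr _%:M.
  exact: conj_Creal (gtr0_real c0).
apply: loewner_pdmx (Phi_pos (pdmx_psdmx pX)).1 c0 _.
have := positive_map_loewner c_herm pX.1 cX.
by rewrite -scalemx1 linearZ /= Phi1 scalemx1.
Qed.

End PositiveMap.

End LoewnerOrder.

Section PowerFamily.
Variables (C : numClosedFieldType) (F : numFieldType) (n : nat).
Variables (a b : F -> 'M[C]_n).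
Hypotheses (aD : forall s t, a s *m a t = a (s + t)) (a0 : a 0 = 1%:M).
Hypotheses (bD : forall s t, b s *m b t = b (s + t)) (b0 : b 0 = 1%:M).
Hypotheses (a_adj : forall s, (a s)^t* = a s) (b_adj : forall s, (b s)^t* = b s).

Let aM s t u : s + t = u -> a s *m a t = a u. Proof. by move=> <-. Qed.
Let bM s t u : s + t = u -> b s *m b t = b u. Proof. by move=> <-. Qed.

Lemma contractionmx_of_loewner t : loewner (a t) (b t) ->
  contractionmx (b (- (t / 2)) *m a (t / 2)).
Proof.
move=> ab v; have tt : t / 2 + t / 2 = t by field.
rewrite dnorm_mulmx adjmxM !b_adj a_adj mulmxA -[_ *m a _ *m a _]mulmxA (aM tt).
rewrite -{2}(b_adj (- (t / 2))) qformJ (le_trans (ab _)) // -qformJ b_adj -qform1.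
by rewrite (bM (_ : _ + t = t / 2)) ?(bM (subrr _)) ?b0 //; field.
Qed.

Lemma loewner_midpoint p q : loewner (a p) (b p) -> loewner (a q) (b q) ->
  loewner (a ((p + q) / 2)) (b ((p + q) / 2)).
Proof.
move=> le_p le_q; set r := (p + q) / 2; set h := r / 2; set d := (p - q) / 4.
set T := b (- h) *m a r *m b (- h).
have hT : T \is hermsymmx.
  by apply/hermsymmxP; rewrite /T !adjmxM !b_adj a_adj mulmxA.
have T_le1 : loewner T 1%:M.
  apply: herm_loewner_scalar => // i; set e := spectral_diag T 0 i.
  have uU := spectral_unitarymx T; set u := row i (spectralmx T).
  have uT : u *m T = e *: u by rewrite {1}(herm_udiag hT) row_udiag.
  set y := u *m b d.
  have y0 : y != 0.
    apply: contra_neq (row_unitary_neq0 uU i) => y0.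
    by rewrite -/u -[u]mulmx1 -b0 -(bM (subrr d)) mulmxA -/y y0 mul0mx.
  have Kp := contractionmx_of_loewner le_p.
  have Kq := contractionmx_adj (contractionmx_of_loewner le_q).
  have yK : y *m ((b (- (p / 2)) *m a (p / 2)) *m (b (- (q / 2)) *m a (q / 2))^t*)
      = e *: y.
    rewrite adjmxM a_adj b_adj /y scalemxAl -uT /T !mulmxA.
    rewrite -[u *m b d *m _]mulmxA (bM (_ : d + - (p / 2) = - h)); last first.
      by rewrite /d /h /r; field.
    rewrite -[_ *m a (p / 2) *m _]mulmxA (aM (_ : p / 2 + q / 2 = r)); last first.
      by rewrite /r; field.
    rewrite -[_ *m b (- h) *m b d]mulmxA (bM (_ : - h + d = - (q / 2))) //.
    by rewrite /d /h /r; field.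
  have := contractionmx_eigen_norm (contractionmxM Kp Kq) y0 yK.
  apply: le_trans; apply: real_ler_norm; exact: spectral_diag_real.
have -> : a r = b h *m T *m (b h)^t*.
  rewrite b_adj /T !mulmxA (bM (subrr h)) b0 mul1mx.
  by rewrite -mulmxA (bM (_ : - h + h = 0)) ?b0 ?mulmx1 // addNr.
move=> v; rewrite qformJ (le_trans (T_le1 _)) // -qformJ mulmx1 b_adj.
by rewrite (bM (_ : h + h = r)) // /h; field.
Qed.

Lemma loewner_dyadic m k : loewner (a 1) (b 1) -> (k <= 2 ^ m)%N ->
  loewner (a (k%:R / (2 ^ m)%:R)) (b (k%:R / (2 ^ m)%:R)).
Proof.
move=> ab1; elim: m k => [|m IHm] k.
  by rewrite expn0 divr1; case: k => [|[|]] //= _; rewrite ?a0 ?b0.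
have m2_neq0 : (2 ^ m)%:R != 0 :> F by rewrite pnatr_eq0 expn_eq0.
move=> le_k; have k_eq := odd_double_half k; rewrite -muln2 in k_eq.
case: (boolP (odd k)) => [k_odd | k_even].
  have lt_k : (k./2 < 2 ^ m)%N by move: le_k k_eq; rewrite expnS k_odd; lia.
  have -> : k%:R / (2 ^ m.+1)%:R = ((k./2)%:R / (2 ^ m)%:R + (k./2).+1%:R / (2 ^ m)%:R) / 2 :> F.
    rewrite -{1}(odd_double_half k) k_odd expnS natrD -natr1 -mul2n !natrM /=.
    by field.
  exact: loewner_midpoint (IHm _ (ltnW lt_k)) (IHm _ lt_k).
have -> : k%:R / (2 ^ m.+1)%:R = (k./2)%:R / (2 ^ m)%:R :> F.
  rewrite -{1}(odd_double_half k) (negbTE k_even) add0n expnS -mul2n !natrM.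
  by field.
by apply: IHm; move: le_k k_eq; rewrite expnS (negbTE k_even); lia.
Qed.

End PowerFamily.

Section RealPowers.
Variable R : realType.
Local Notation C := R[i].

Definition eigval n (X : 'M[C]_n) i : R := complex.Re (spectral_diag X 0 i).

Lemma mpowE n (X : 'M[C]_n) p :
  mpow X p = udiag (spectralmx X) (fun i => (eigval X i `^ p)%:C%C).
Proof.
rewrite /mpow invmx_unitary; last exact: spectral_unitarymx.
have -> : map_mx (fun z => ((complex.Re z) `^ p)%:C%C) (spectral_diag X)
    = \row_i (eigval X i `^ p)%:C%C by apply/rowP => i; rewrite !mxE.
by [].
Qed.

Lemma herm_eigval n (X : 'M[C]_n) i : X \is hermsymmx ->
  (eigval X i)%:C%C = spectral_diag X 0 i.
Proof. by move=> hX; rewrite RRe_real ?spectral_diag_real. Qed.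

Lemma herm_udiag_eigval n (X : 'M[C]_n) : X \is hermsymmx ->
  udiag (spectralmx X) (fun i => (eigval X i)%:C%C) = X.
Proof.
move=> hX; rewrite [RHS](herm_udiag hX); congr udiag.
by apply: boolp.funext => i; apply: herm_eigval.
Qed.

Lemma eigval_qform n (X : 'M[C]_n) i : X \is hermsymmx ->
  (eigval X i)%:C%C = qform X (row i (spectralmx X)).
Proof. by move=> hX; rewrite herm_eigval // spectral_diag_qform. Qed.

Lemma pdmx_eigval_gt0 n (X : 'M[C]_n) i : pdmx X -> 0 < eigval X i.
Proof.
move=> pX; rewrite -ltcR (eigval_qform _ pX.1).
by apply: pX.2; apply/row_unitary_neq0/spectral_unitarymx.
Qed.

Lemma mpow_herm n (X : 'M[C]_n) p : mpow X p \is hermsymmx.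
Proof.
by rewrite mpowE; apply: udiag_herm => i; apply/complex_realP; eexists.
Qed.

Lemma mpow_adj n (X : 'M[C]_n) p : (mpow X p)^t* = mpow X p.
Proof. exact/hermsymmxP/mpow_herm. Qed.

Lemma mpow_pdmx n (X : 'M[C]_n) p : pdmx X -> pdmx (mpow X p).
Proof.
move=> pX; rewrite mpowE; apply: udiag_pdmx; first exact: spectral_unitarymx.
by move=> i; rewrite ltcR powR_gt0 ?pdmx_eigval_gt0.
Qed.

Lemma mpowD n (X : 'M[C]_n) s t : pdmx X ->
  mpow X s *m mpow X t = mpow X (s + t).
Proof.
move=> pX; rewrite !mpowE (udiagM (spectral_unitarymx X)); congr udiag.
apply: boolp.funext => i; rewrite -rmorphM /= powRD //.
by apply/implyP => _; rewrite gt_eqF ?pdmx_eigval_gt0.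
Qed.

Lemma mpowr0 n (X : 'M[C]_n) : mpow X 0 = 1%:M.
Proof.
rewrite mpowE -(udiag_const (spectral_unitarymx X)); congr udiag.
by apply: boolp.funext => i; rewrite powRr0.
Qed.

Lemma mpowr1 n (X : 'M[C]_n) : pdmx X -> mpow X 1 = X.
Proof.
move=> pX; rewrite mpowE -[RHS](herm_udiag_eigval pX.1); congr udiag.
by apply: boolp.funext => i; rewrite powRr1 // ltW // pdmx_eigval_gt0.
Qed.

Lemma tr_mpow n (X : 'M[C]_n) s : \tr (mpow X s) = (\sum_i eigval X i `^ s)%:C%C.
Proof.
rewrite mpowE /udiag mxtrace_mulC mulmxA (unitarymxP (spectral_unitarymx X)).
by rewrite mul1mx mxtrace_diag rmorph_sum; apply: eq_bigr => i _; rewrite mxE.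
Qed.

Lemma tr_mpow_ge0 n (X : 'M[C]_n) s : 0 <= \tr (mpow X s).
Proof. by rewrite tr_mpow ler0c sumr_ge0 // => i _; apply: powR_ge0. Qed.

Lemma qform_mpow n (X : 'M[C]_n) v t : qform (mpow X t) v =
  (\sum_j eigval X j `^ t * complex.Re (`|(v *m (spectralmx X)^t*) 0 j| ^+ 2))%:C%C.
Proof.
rewrite mpowE qform_udiag rmorph_sum; apply: eq_bigr => j _.
rewrite rmorphM; congr (_ * _); symmetry; apply: RRe_real.
by rewrite realX ?normr_real.
Qed.

End RealPowers.

Section Tangent.
Variable R : realType.

Lemma powR_tangent_le0 (s x y : R) : s <= 0 -> 0 < x -> 0 < y ->
  y `^ s + s * y `^ (s - 1) * (x - y) <= x `^ s.
Proof.
move=> s_le0 x_gt0 y_gt0; set t := x / y.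
have t_gt0 : 0 < t by rewrite divr_gt0.
have ys_gt0 : 0 < y `^ s by rewrite powR_gt0.
have -> : y `^ s + s * y `^ (s - 1) * (x - y) = y `^ s * (1 + s * (t - 1)).
  rewrite powRB; last by apply/implyP => _; rewrite gt_eqF.
  by rewrite powRr1 ?(ltW y_gt0) // /t; field; rewrite gt_eqF.
rewrite -[x](divfK (lt0r_neq0 y_gt0)) -/t powRM ?(ltW t_gt0) ?(ltW y_gt0) //.
rewrite mulrC ler_pM2r //.
have ln_le : ln t <= t - 1.
  by have := @le_ln1Dx R (t - 1); rewrite (addrC 1) subrK; apply; lra.
apply: (@le_trans _ _ (1 + s * ln t)); first by rewrite lerD2l ler_wnM2l.
by rewrite /powR gt_eqF // mulrC; apply: expR_ge1Dx.
Qed.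

Lemma powR_tangent_ge1 (s x y : R) : 1 <= s -> 0 < x -> 0 < y ->
  y `^ s + s * y `^ (s - 1) * (x - y) <= x `^ s.
Proof.
move=> s_ge1 x_gt0 y_gt0; have [->|s_neq1] := eqVneq s 1.
  by rewrite subrr powRr0 !powRr1 ?(ltW x_gt0) ?(ltW y_gt0) // !mul1r addrC subrK.
have s_gt1 : 1 < s by rewrite lt_neqAle eq_sym s_neq1.
set Q := y `^ (s - 1); set Ys := y `^ s.
have YsQ : Ys = Q * y.
  rewrite /Ys /Q -{3}[y](powRr1 (ltW y_gt0)) -powRD ?subrK //.
  by apply/implyP => _; rewrite gt_eqF.
have r_gt0 : 0 < s / (s - 1) by rewrite divr_gt0 //; lra.
have rs : s^-1 + (s / (s - 1))^-1 = 1 by field; lra.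
have Q_pow : Q `^ (s / (s - 1)) = Ys.
  by rewrite /Q -powRrM /Ys; congr (_ `^ _); field; lra.
(* Young's inequality with the conjugate exponents s and s / (s - 1) *)
have := conjugate_powR (ltW x_gt0) (powR_ge0 y (s - 1)) (lt_trans ltr01 s_gt1) r_gt0 rs.
rewrite -/Q Q_pow => young.
have : s * (x * Q) <= x `^ s + (s - 1) * Ys.
  have -> : x `^ s + (s - 1) * Ys = s * (x `^ s / s + Ys / (s / (s - 1))).
    by field; lra.
  by rewrite ler_pM2l //; lra.
rewrite YsQ; nra.
Qed.

End Tangent.

Lemma affine_convex_comb (T : comPzRingType) n (w x : 'I_n -> T) (c d e : T) :
  \sum_i w i = 1 -> c + d * (\sum_i x i * w i - e) = \sum_i w i * (c + d * (x i - e)).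
Proof.
move=> w1; transitivity (\sum_i (c * w i + d * (x i * w i) - d * e * w i)).
  by rewrite sumrB big_split /= -!mulr_sumr w1; ring.
by apply: eq_bigr => i _; ring.
Qed.

Section Klein.
Variable R : realType.
Local Notation C := R[i].

Lemma sum_sqr_unitary_row n (U V : 'M[C]_n) j : U \is unitarymx -> V \is unitarymx ->
  \sum_i `|(row j V *m U^t*) 0 i| ^+ 2 = 1.
Proof.
move=> uU uV; have := qform_udiag U (fun=> 1) (row j V).
rewrite (udiag_const uU) -(udiag_const uV) qform_udiag_row // => ->.
by apply: eq_bigr => i _; rewrite mul1r.
Qed.

Lemma norm_unitary_entryC n (U V : 'M[C]_n) i j :
  `|(row j V *m U^t*) 0 i| = `|(row i U *m V^t*) 0 j|.
Proof.
rewrite -!row_mul !mxE -norm_conjC; congr `|_|.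
have /matrixP/(_ i j) := adjmxM V (U^t*); rewrite trmxCK !mxE => <-.
by [].
Qed.

Lemma klein_udiag n (U V : 'M[C]_n) (a b : 'I_n -> R) (f g : R -> R) :
  U \is unitarymx -> V \is unitarymx ->
  (forall i j, f (b j) + g (b j) * (a i - b j) <= f (a i)) ->
  \sum_j ((f (b j))%:C%C + (g (b j))%:C%C *
     (qform (udiag U (fun i => (a i)%:C%C)) (row j V) - (b j)%:C%C))
  <= \sum_i (f (a i))%:C%C.
Proof.
move=> uU uV tangent; set w := fun j i => `|(row j V *m U^t*) 0 i| ^+ 2.
have w_col i : \sum_j w j i = 1.
  by rewrite /w; under eq_bigr do rewrite norm_unitary_entryC; apply: sum_sqr_unitary_row.
have -> : \sum_i ((f (a i))%:C%C : C) = \sum_j \sum_i w j i * (f (a i))%:C%C.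
  by rewrite exchange_big; apply: eq_bigr => i _; rewrite -mulr_suml w_col mul1r.
apply: ler_sum => j _; rewrite qform_udiag affine_convex_comb; last first.
  exact: sum_sqr_unitary_row.
apply: ler_sum => i _; rewrite ler_wpM2l ?exprn_ge0 //.
by rewrite -!rmorphB -!rmorphM -rmorphD lecR.
Qed.

Lemma tr_mpow_klein n (X Y : 'M[C]_n) s : pdmx X -> pdmx Y ->
  (forall x y : R, 0 < x -> 0 < y -> y `^ s + s * y `^ (s - 1) * (x - y) <= x `^ s) ->
  \tr (mpow Y s) + \sum_j (s * eigval Y j `^ (s - 1))%:C%C *
    (qform X (row j (spectralmx Y)) - qform Y (row j (spectralmx Y)))
  <= \tr (mpow X s).
Proof.
move=> pX pY tangent; rewrite !tr_mpow rmorph_sum -big_split /=.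
have := @klein_udiag n (spectralmx X) (spectralmx Y) (eigval X) (eigval Y)
  (fun x => x `^ s) (fun y => s * y `^ (s - 1)) (spectral_unitarymx X) (spectral_unitarymx Y)
  (fun i j => tangent _ _ (pdmx_eigval_gt0 i pX) (pdmx_eigval_gt0 j pY)).
rewrite rmorph_sum; apply: le_trans; apply: ler_sum => j _.
by rewrite (herm_udiag_eigval pX.1) (eigval_qform _ pY.1).
Qed.

Lemma loewner_tr_mpow_nonpos n (X Y : 'M[C]_n) s : pdmx X -> pdmx Y ->
  loewner X Y -> s <= 0 -> \tr (mpow Y s) <= \tr (mpow X s).
Proof.
move=> pX pY XY s_le0; have tangent x y := @powR_tangent_le0 R s x y s_le0.
apply: le_trans _ (tr_mpow_klein pX pY tangent).
rewrite lerDl sumr_ge0 // => j _; rewrite mulr_le0 ?subr_le0 //.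
by rewrite -[0 : C]/(0%:C%C) lecR mulr_le0_ge0 ?powR_ge0.
Qed.

Lemma loewner_tr_mpow_ge1 n (X Y : 'M[C]_n) s : pdmx X -> pdmx Y ->
  loewner X Y -> 1 <= s -> \tr (mpow X s) <= \tr (mpow Y s).
Proof.
move=> pX pY XY s_ge1; have tangent x y := @powR_tangent_ge1 R s x y s_ge1.
apply: le_trans _ (tr_mpow_klein pY pX tangent).
rewrite lerDl sumr_ge0 // => j _; rewrite mulr_ge0 ?subr_ge0 //.
by rewrite ler0c mulr_ge0 ?powR_ge0 // (le_trans ler01).
Qed.

End Klein.

Import numFieldNormedType.Exports.

Lemma continuous_powR_exponent (R : realType) (b : R) : 0 < b -> continuous (powR b).
Proof.
move=> b0; have -> : powR b = (fun t => expR (t * ln b)).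
  by apply: boolp.funext => t; rewrite /powR gt_eqF.
move=> t; apply: continuous_comp; last exact: continuous_expR.
by apply: continuousM => //; apply: cvg_cst.
Qed.

Lemma continuous_sum_powR (R : realType) n (e w : 'I_n -> R) :
  (forall j, 0 < e j) -> continuous (fun t => \sum_j e j `^ t * w j).
Proof.
move=> e_gt0; apply: continuous_big => [|j _]; first exact: add_continuous.
move=> t; apply: continuousM; first exact: continuous_powR_exponent.
exact: cvg_cst.
Qed.

Lemma dyadic_approx (R : archiFieldType) (t e : R) : 0 <= t <= 1 -> 0 < e ->
  exists m k, (k <= 2 ^ m)%N /\ `|t - k%:R / (2 ^ m)%:R| < e.
Proof.
move=> /andP[t_ge0 t_le1] e_gt0; set M := (Num.truncn e^-1).+1.
set D : R := (2 ^ M)%:R; have D_gt0 : 0 < D by rewrite ltr0n expn_gt0.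
have eD_gt1 : 1 < e * D.
  rewrite -(mulfV (lt0r_neq0 e_gt0)) ltr_pM2l // (lt_trans (truncnS_gt _)) //.
  by rewrite ltr_nat ltn_expl.
have tD_ge0 : 0 <= t * D by rewrite mulr_ge0 // ltW.
have /andP[k_le k_gt] := truncn_itv tD_ge0; set k := Num.truncn (t * D) in k_le k_gt *.
exists M, k; split.
  by rewrite -(ler_nat R) (le_trans k_le) // -/D -{2}[D]mul1r ler_pM2r.
have -> : t - k%:R / D = (t * D - k%:R) / D by field; rewrite lt0r_neq0.
rewrite ger0_norm ?divr_ge0 ?subr_ge0 ?(ltW D_gt0) // ltr_pdivrMr //.
by move: k_gt; rewrite -natr1; nra.
Qed.

Section LoewnerHeinz.
Variables (R : realType) (n : nat) (A B : 'M[R[i]]_n).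
Hypotheses (pA : pdmx A) (pB : pdmx B) (AB : loewner A B).

Lemma loewner_mpow t : 0 <= t <= 1 -> loewner (mpow A t) (mpow B t).
Proof.
move=> t01 v.
pose g X s := \sum_j eigval X j `^ s * complex.Re (`|(v *m (spectralmx X)^t*) 0 j| ^+ 2).
have g_qform X s : qform (mpow X s) v = (g X s)%:C%C := qform_mpow X v s.
have g_cont X : pdmx X -> continuous (g X).
  by move=> pX; apply: continuous_sum_powR => j; apply: pdmx_eigval_gt0.
have g_dyadic m k : (k <= 2 ^ m)%N -> g A (k%:R / (2 ^ m)%:R) <= g B (k%:R / (2 ^ m)%:R).
  move=> le_k; have AB1 : loewner (mpow A 1) (mpow B 1) by rewrite !mpowr1.
  have := loewner_dyadic (fun s t => mpowD s t pA) (mpowr0 A)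
    (fun s t => mpowD s t pB) (mpowr0 B) (mpow_adj A) (mpow_adj B) AB1 le_k v.
  by rewrite !g_qform lecR.
rewrite !g_qform lecR -subr_ge0 leNgt; apply/negP => gBA_lt0.
have H_cont : continuous (fun s => g B s - g A s).
  by move=> s; apply: continuousB; apply: g_cont.
have := (nbhs_ballP _ _).1 (cvgr_lt _ (H_cont t) _ gBA_lt0).
rewrite /nbhs_ball /nbhs_ball_ => -[e /= e_gt0 He].
have [m [k [le_k near_t]]] := dyadic_approx t01 e_gt0.
by have := He _ near_t; rewrite subr_lt0 ltNge g_dyadic.
Qed.

Lemma loewner_mpowN t : 0 <= t <= 1 -> loewner (mpow B (- t)) (mpow A (- t)).
Proof.
move=> t01; apply: loewner_invmx (loewner_mpow t01).
- exact/pdmx_psdmx/mpow_pdmx.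
- exact: mpow_herm.
- exact: mpow_herm.
- by rewrite mpowD // subrr mpowr0.
- by rewrite mpowD // subrr mpowr0.
Qed.

End LoewnerHeinz.

Unset Implicit Arguments.

Theorem corollary4p1 (R : realType) (k n : nat)
  (A B : 'M[R[i]]_k) (Phi : {linear 'M[R[i]]_k -> 'M[R[i]]_n}) (p : R) :
  pdmx A -> pdmx B -> positive_map Phi -> unital_map Phi ->
  -1 <= p <= 1 -> p != 0 ->
  \tr (mpow (Phi (mpow (A + B) p)) (- p^-1))
    <= \tr (mpow (Phi (mpow A p)) (- p^-1)) + \tr (mpow (Phi (mpow B p)) (- p^-1)).
Proof.
move=> pA pB Phi_pos Phi1 /andP[p_geN1 p_le1] p_neq0.
have pAB := pdmxD pA pB; have A_le_AB := loewner_addr A (pdmx_psdmx pB).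
have pPhi X : pdmx X -> pdmx (Phi (mpow X p)).
  by move=> pX; exact: (@unital_positive_map_pdmx _ _ _ Phi Phi_pos _ Phi1 (mpow_pdmx p pX)).
have Phi_le X Y : loewner (mpow X p) (mpow Y p) -> loewner (Phi (mpow X p)) (Phi (mpow Y p)).
  by apply: positive_map_loewner => //; apply: mpow_herm.
rewrite -[X in X <= _]addr0; apply: lerD; last exact: tr_mpow_ge0.
have [p_gt0 | p_le0] := ltrP 0 p.
  have p01 : 0 <= p <= 1 by rewrite ltW.
  have AB_p := loewner_mpow pA pAB A_le_AB p01.
  apply: loewner_tr_mpow_nonpos (pPhi _ pA) (pPhi _ pAB) (Phi_le _ _ AB_p) _.
  by rewrite oppr_le0 invr_ge0 ltW.
have p_lt0 : p < 0 by rewrite lt_neqAle p_neq0.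
have Np01 : 0 <= - p <= 1 by apply/andP; split; lra.
have := loewner_mpowN pA pAB A_le_AB Np01; rewrite opprK => AB_p.
apply: loewner_tr_mpow_ge1 (pPhi _ pAB) (pPhi _ pA) (Phi_le _ _ AB_p) _.
by rewrite -invrN invf_ge1 ?oppr_gt0 // lerNl.
Qed.
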